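(* Consider an unlabeled tabletop rearrangement instance in which all objects have congruent disc footprints (uniform cylinders). Then its unlabeled dependency graph is a planar bipartite graph with maximum degree at most $5$.
   Context: A tabletop rearrangement instance consists of $n$ objects (generalized cylinders of equal height, so only their planar footprints matter) in a bounded planar workspace, a start arrangement and a goal arrangement. An arrangement assigns to each object a pose in $SE(2)$; it is feasible if no two placed footprints overlap, where two placed footprints overlap if their interiors intersect (for discs of radius $r$: centers at distance $<2r$). Both the start and goal arrangements are feasible. In the unlabeled setting objects are interchangeable. The unlabeled dependency graph is the bipartite graph with one start vertex for each start pose and one goal vertex for each goal pose, with an edge between a start vertex and a goal vertex iff a footprint placed at that start pose overlaps a footprint placed at that goal pose. *)

From HB Require Import structures.
From mathcomp Require Import all_boot all_order all_algebra.
From mathcomp Require Import all_classical all_reals topology normedtype.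
Set Implicit Arguments. Unset Strict Implicit. Unset Printing Implicit Defensive.
Import Order.TTheory GRing.Theory Num.Theory.
Import numFieldNormedType.Exports.
Local Open Scope ring_scope.
Local Open Scope classical_set_scope.

Section Defs.
Variable R : realType.

Local Notation point := (R * R)%type.

(* Two disc footprints of radius r centred at c and d overlap (their
   interiors intersect) iff the distance of the centres is < 2r;
   written with squared Euclidean distance. *)
Definition discs_overlap (r : R) (c d : point) : Prop :=
  (c.1 - d.1) ^+ 2 + (c.2 - d.2) ^+ 2 < (2 * r) ^+ 2.

Definition feasible (n : nat) (r : R) (a : 'I_n -> point) : Prop :=
  forall i j : 'I_n, i != j -> ~ discs_overlap r (a i) (a j).

(* Unlabeled dependency graph: vertices are start poses (inl i) and goal
   poses (inr j); adjacency (symmetric) iff the footprints overlap. *)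
Definition udg (n : nat) (r : R) (s g : 'I_n -> point)
  (u v : 'I_n + 'I_n) : Prop :=
  match u, v with
  | inl i, inr j => discs_overlap r (s i) (g j)
  | inr j, inl i => discs_overlap r (s i) (g j)
  | _, _ => False
  end.

Definition unit_interval : set R := [set t | 0 <= t <= 1].

Definition planar_drawing (V : finType) (E : V -> V -> Prop)
  (p : V -> point) (arc : V -> V -> R -> point) : Prop :=
  injective p /\
  forall u v, E u v ->
    [/\ ({within unit_interval, continuous (arc u v)}),
        arc u v 0 = p u /\ arc u v 1 = p v,
        (forall t t', unit_interval t -> unit_interval t' -> arc u v t = arc u v t' -> t = t'),
        (forall t w, 0 < t < 1 -> arc u v t <> p w) &
        (forall u' v', E u' v' -> ~ (u' = u /\ v' = v) -> ~ (u' = v /\ v' = u) ->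
           forall t t', 0 < t < 1 -> 0 < t' < 1 -> arc u v t <> arc u' v' t')].

Definition planar (V : finType) (E : V -> V -> Prop) : Prop :=
  exists p arc, planar_drawing E p arc.

Definition max_degree_le (V : finType) (E : V -> V -> Prop) (k : nat) : Prop :=
  forall u : V, exists S : {set V}, (forall v, E u v -> v \in S) /\ (#|S| <= k)%N.

Definition bipartite_between (n : nat) (E : 'I_n + 'I_n -> 'I_n + 'I_n -> Prop) : Prop :=
  forall u v, E u v -> match u, v with inl _, inr _ | inr _, inl _ => True | _, _ => False end.

End Defs.

From mathcomp Require Import all_boot all_order all_algebra.
From mathcomp Require Import all_classical all_reals topology normedtype.
From mathcomp Require Import ring lra complex.
Import Order.TTheory GRing.Theory Num.Theory.
Import numFieldNormedType.Exports.
Set Implicit Arguments.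
Unset Strict Implicit.
Unset Printing Implicit Defensive.
Local Open Scope ring_scope.

(* Discs of radius r overlap iff their centres are closer than 2r, so start
   centres are pairwise at least 2r apart, and so are goal centres, while an
   edge joins a start and a goal centre closer than 2r.  Draw each edge as the
   segment between its centres (after shifting all goals by a tiny vector, so
   that no start centre coincides with a goal centre).  Crossing segments
   [s g] and [s' g'] would give |s s'| + |g g'| <= |s g| + |s' g'| < 4r, and
   segments with a common endpoint can only meet if they lie on one ray,
   which puts their other endpoints within 2r of each other.  For the degree
   bound, cut the plane around a vertex into six closed 60-degree sectors,
   two of them bounded by the direction of a neighbour x.  Two points of one
   sector that are closer than 2r to its apex are closer than 2r to each
   other, so each sector holds at most one neighbour, and the two sectors
   bordering x hold none besides x. *)

Section Plane.
Variable R : realType.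
Implicit Types (a b c d e o p q : R * R) (t x : R).

Definition dist2 c d : R := (c.1 - d.1) ^+ 2 + (c.2 - d.2) ^+ 2.
Definition dist c d : R := Num.sqrt (dist2 c d).
Definition lerp c d t : R * R := (c.1 + t * (d.1 - c.1), c.2 + t * (d.2 - c.2)).

Lemma dist2_ge0 c d : 0 <= dist2 c d.
Proof. by rewrite addr_ge0 ?sqr_ge0. Qed.

Lemma dist2C c d : dist2 c d = dist2 d c.
Proof. by rewrite /dist2; ring. Qed.

Lemma distC c d : dist c d = dist d c.
Proof. by rewrite /dist dist2C. Qed.

Lemma dist_ge0 c d : 0 <= dist c d.
Proof. exact: sqrtr_ge0. Qed.

Lemma dist_xx c : dist c c = 0.
Proof. by rewrite /dist /dist2 !subrr expr0n addr0 sqrtr0. Qed.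

Lemma dist2_gt0 c d : c != d -> 0 < dist2 c d.
Proof.
move=> cd; rewrite lt_def dist2_ge0 andbT paddr_eq0 ?sqr_ge0 //.
rewrite !sqrf_eq0 !subr_eq0; apply: contra cd => /andP[/eqP c1 /eqP c2].
by case: c c1 c2 => ? ? /= -> ->; case: d.
Qed.

Lemma dist_gt0 c d : c != d -> 0 < dist c d.
Proof. by move/dist2_gt0; rewrite sqrtr_gt0. Qed.

Lemma dist_geE c d x : 0 <= x -> (x <= dist c d) = (x ^+ 2 <= dist2 c d).
Proof. by move=> x0; rewrite -{1}(ger0_norm x0) -sqrtr_sqr ler_sqrt ?dist2_ge0. Qed.

Lemma dist_ltE c d x : 0 <= x -> (dist c d < x) = (dist2 c d < x ^+ 2).
Proof. by move=> x0; rewrite !ltNge dist_geE. Qed.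

Lemma dist_triangle c d e : dist c e <= dist c d + dist d e.
Proof.
have := le_normcD (((c.1 - d.1) +i* (c.2 - d.2))%C : Rcomplex R)
                  ((d.1 - e.1) +i* (d.2 - e.2))%C.
by rewrite /= !addrA !subrK.
Qed.

Lemma lerp0 c d : lerp c d 0 = c.
Proof. by rewrite /lerp !mul0r !addr0; case: c. Qed.

Lemma lerp1 c d : lerp c d 1 = d.
Proof. by rewrite /lerp !mul1r !subrKC; case: d. Qed.

Lemma lerp_rev c d t : lerp d c t = lerp c d (1 - t).
Proof. by rewrite /lerp; congr pair; ring. Qed.

Lemma lerp_continuous c d : continuous (lerp c d).
Proof.
have affine (x y : R) : continuous (fun t : R => x + t * y).
  move=> t; have cst : {for t, continuous (fun=> x)} by exact: cst_continuous.
  apply: (@continuousD R R^o R _ (fun t => t * y) t cst).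
  exact: cvgMr_tmp cvg_id.
by move=> t; exact: (cvg_pair (affine _ _ t) (affine _ _ t)).
Qed.

Lemma dist_lerpl c d t : 0 <= t -> dist c (lerp c d t) = t * dist c d.
Proof.
move=> t0; rewrite /dist -[in RHS](ger0_norm t0) -sqrtr_sqr -sqrtrM ?sqr_ge0 //.
by congr Num.sqrt; rewrite /dist2 /=; ring.
Qed.

Lemma dist_lerpr c d t : t <= 1 -> dist (lerp c d t) d = (1 - t) * dist c d.
Proof.
move=> t1; have -> : lerp c d t = lerp d c (1 - t) by rewrite /lerp; congr pair; ring.
by rewrite distC dist_lerpl ?subr_ge0 // distC.
Qed.

Lemma lerp_inj c d t t' :
  c != d -> 0 <= t -> 0 <= t' -> lerp c d t = lerp c d t' -> t = t'.
Proof.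
move=> cd t0 t'0 /(congr1 (dist c)); rewrite !dist_lerpl //.
by apply: mulIf; rewrite gt_eqF ?dist_gt0.
Qed.

Lemma dist_crossing a b c d t t' : 0 <= t <= 1 -> 0 <= t' <= 1 ->
  lerp a b t = lerp c d t' -> dist a c + dist b d <= dist a b + dist c d.
Proof.
move=> /andP[t0 t1] /andP[t'0 t'1] pE; set p := lerp a b t in pE.
have ap : dist a p = t * dist a b by exact: dist_lerpl.
have pb : dist p b = (1 - t) * dist a b by exact: dist_lerpr.
have cp : dist c p = t' * dist c d by rewrite pE dist_lerpl.
have pd : dist p d = (1 - t') * dist c d by rewrite pE dist_lerpr.
have := dist_triangle a p c; have := dist_triangle b p d.
rewrite (distC p c) (distC b p); lra.
Qed.

Lemma dist_same_ray a b b' t t' : 0 < t -> 0 < t' ->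
  lerp a b t = lerp a b' t' -> dist b b' <= Num.max (dist a b) (dist a b').
Proof.
wlog tt' : b b' t t' / t <= t'.
  move=> wlog_ray t0 t'0 pE; case: (lerP t t') => [tt'|/ltW t't].
    exact: wlog_ray tt' t0 t'0 pE.
  by rewrite distC maxC; apply: (wlog_ray b' b t' t t't t'0 t0).
move=> t0 t'0 pE; set s := t / t'.
have s0 : 0 <= s by rewrite divr_ge0 ?ltW.
have s1 : s <= 1 by rewrite ler_pdivrMr ?mul1r.
have b'E : b' = lerp a b s.
  have t'_neq0 : t' != 0 by rewrite gt_eqF.
  have coord (x y z : R) : x + t * (y - x) = x + t' * (z - x) -> z = x + s * (y - x).
    move=> xyz; apply: (mulfI t'_neq0); rewrite mulrDr mulrA mulrCA divff // mulr1; lra.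
  by case: b' pE => x y [/coord -> /coord ->].
rewrite b'E distC dist_lerpr // le_max; apply/orP; left.
by rewrite ler_piMl ?dist_ge0 // lerBlDr lerDl.
Qed.

(* [hexcoord o e c] are the coordinates of [c - o] in the basis formed by
   [e - o] and its rotation by 60 degrees.  In these coordinates the squared
   length is [dist2 e o * hexq], [hexrot] is the rotation by 60 degrees, and
   [in_sector k] is the k-th of the six 60-degree cones around the origin. *)
Definition hexq p : R := p.1 ^+ 2 + p.1 * p.2 + p.2 ^+ 2.

Definition hexrot p : R * R := (- p.2, p.1 + p.2).

Definition in_sector (k : nat) p : bool :=
  (0 <= (iter k hexrot p).1) && (0 <= (iter k hexrot p).2).

Definition sector p : 'I_6 :=
  inord (if 0 <= p.1 then if 0 <= p.2 then 0%N else if 0 <= p.1 + p.2 then 1%N else 2%N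
         else if p.2 <= 0 then 3%N else if p.1 + p.2 <= 0 then 4%N else 5%N).

Lemma subpairE p q : p - q = (p.1 - q.1, p.2 - q.2).
Proof. by []. Qed.

Lemma hexrotB p q : hexrot (p - q) = hexrot p - hexrot q.
Proof. by rewrite !subpairE /hexrot /=; congr pair; ring. Qed.

Lemma hexq_rot p : hexq (hexrot p) = hexq p.
Proof. by rewrite /hexq /=; ring. Qed.

Lemma hexqB_quadrant p q : 0 <= p.1 -> 0 <= p.2 -> 0 <= q.1 -> 0 <= q.2 ->
  hexq (p - q) <= Num.max (hexq p) (hexq q).
Proof.
rewrite subpairE /hexq /= le_max => p1 p2 q1 q2.
case: (lerP q.1 p.1) => c1; case: (lerP q.2 p.2) => c2.
- by apply/orP; left; nra.
- by case: (lerP (q.2 - p.2) (p.1 - q.1)) => c3; apply/orP; [left|right]; nra.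
- by case: (lerP (p.2 - q.2) (q.1 - p.1)) => c3; apply/orP; [right|left]; nra.
- by apply/orP; right; nra.
Qed.

Lemma iter_hexrotB k p q : iter k hexrot (p - q) = iter k hexrot p - iter k hexrot q.
Proof. by elim: k => //= k ->; rewrite hexrotB. Qed.

Lemma hexq_iter_rot k p : hexq (iter k hexrot p) = hexq p.
Proof. by elim: k => //= k IHk; rewrite hexq_rot. Qed.

Lemma hexqB_sector k p q : in_sector k p -> in_sector k q ->
  hexq (p - q) <= Num.max (hexq p) (hexq q).
Proof.
move=> /andP[p1 p2] /andP[q1 q2].
by rewrite -(hexq_iter_rot k) iter_hexrotB -(hexq_iter_rot k p) -(hexq_iter_rot k q)
  hexqB_quadrant.
Qed.

Lemma sector_spec p : in_sector (sector p) p.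
Proof.
rewrite /sector /in_sector.
by repeat case: ifP => ?; rewrite inordK //= ?oppr_ge0; lra.
Qed.

Lemma sector_basis : sector (1, 0) = inord 0.
Proof. by rewrite /sector /= ler01 lexx. Qed.

Lemma in_sector1_basis : in_sector 1 (1, 0).
Proof. by rewrite /in_sector /=; lra. Qed.

Lemma sqrt3_neq0 : Num.sqrt 3 != 0 :> R.
Proof. by rewrite sqrtr_eq0 -ltNge ltr0n. Qed.

Definition skew p : R * R := (p.1 - p.2 / Num.sqrt 3, 2 * p.2 / Num.sqrt 3).

Lemma hexq_skew p : hexq (skew p) = p.1 ^+ 2 + p.2 ^+ 2.
Proof.
have -> : hexq (skew p) = p.1 ^+ 2 + 3 * p.2 ^+ 2 / Num.sqrt 3 ^+ 2.
  by rewrite /hexq /skew /=; field; exact: sqrt3_neq0.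
by rewrite sqr_sqrtr ?ler0n // mulrAC divff ?pnatr_eq0 // mul1r.
Qed.

Lemma skewB p q : skew (p - q) = skew p - skew q.
Proof. by rewrite !subpairE /skew /=; congr pair; field; exact: sqrt3_neq0. Qed.

Definition hexcoord o e c : R * R :=
  skew (((c.1 - o.1) * (e.1 - o.1) + (c.2 - o.2) * (e.2 - o.2)) / dist2 e o,
        ((e.1 - o.1) * (c.2 - o.2) - (e.2 - o.2) * (c.1 - o.1)) / dist2 e o).

Lemma dist2_hexcoord o e c d : e != o ->
  dist2 c d = dist2 e o * hexq (hexcoord o e c - hexcoord o e d).
Proof.
move/dist2_gt0/gt_eqF/negbT; rewrite /hexcoord -skewB hexq_skew subpairE /dist2 /=.
by move=> eo; field.
Qed.

Lemma hexcoord_origin o e : hexcoord o e o = 0.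
Proof. by apply: injective_projections; rewrite /= !subrr; ring. Qed.

Lemma hexcoord_basis o e : e != o -> hexcoord o e e = (1, 0).
Proof.
move/dist2_gt0/gt_eqF/negbT; rewrite /hexcoord /skew /dist2 /= => eo.
by congr pair; field; rewrite ?eo ?sqrt3_neq0.
Qed.

Lemma card_separated_in_ball_le5 (T : finType) (A : {set T}) (q : T -> R * R)
    o (d : R) :
  {in A, forall y, dist2 (q y) o < d} ->
  {in A &, forall y z, y != z -> d <= dist2 (q y) (q z)} -> (#|A| <= 5)%N.
Proof.
move=> near_o sep; have [->|[x0 x0A]] := set_0Vmem A; first by rewrite cards0.
have [x0o|x0o] := eqVneq (q x0) o.
  apply: leq_trans (subset_leq_card (_ : A \subset [set x0])) _; last by rewrite cards1.
  apply/fintype.subsetP => y yA; rewrite inE; apply/contraT => yx0.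
  by have := sep y x0 yA x0A yx0; rewrite x0o leNgt near_o.
pose K := dist2 (q x0) o; pose c y := hexcoord o (q x0) (q y).
have K0 : 0 < K by exact: dist2_gt0.
have dist2_o y : dist2 (q y) o = K * hexq (c y).
  by rewrite (dist2_hexcoord _ _ x0o) hexcoord_origin subr0.
have same_sector k : {in A &, forall y y',
    in_sector k (c y) -> in_sector k (c y') -> y = y'}.
  move=> y y' yA y'A ky ky'; case: (eqVneq y y') => // yy'; exfalso.
  have := sep y y' yA y'A yy'; apply/negP; rewrite -ltNge (dist2_hexcoord _ _ x0o).
  apply: le_lt_trans (ler_wpM2l (ltW K0) (hexqB_sector ky ky')) _.
  by rewrite maxr_pMr ?ltW // gt_max -!dist2_o !near_o.
pose f y := sector (c y).
have f_inj : {in A &, injective f}.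
  move=> y y' yA y'A fy; apply: (same_sector (f y)) => //; first exact: sector_spec.
  by rewrite fy; exact: sector_spec.
have f_neq1 y : y \in A -> f y != inord 1.
  move=> yA; apply/eqP => fy1.
  have yx0 : y = x0.
    apply: (same_sector 1%N) => //.
      by have := sector_spec (c y); rewrite -/(f y) fy1 inordK.
    by rewrite /c hexcoord_basis // in_sector1_basis.
  move: fy1; rewrite yx0 /f /c hexcoord_basis // sector_basis.
  by move=> /(congr1 (@nat_of_ord 6)); rewrite !inordK.
have image_f : f @: A \subset [set~ inord 1].
  by apply/fintype.subsetP => _ /imsetP[y yA ->]; rewrite !inE f_neq1.
rewrite -(card_in_imset f_inj) (leq_trans (subset_leq_card image_f)) //.
by rewrite cardsC1 card_ord.
Qed.


Definition biprel n (E : 'I_n -> 'I_n -> Prop) (u v : 'I_n + 'I_n) : Prop :=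
  match u, v with
  | inl i, inr j | inr j, inl i => E i j
  | _, _ => False
  end.

Lemma biprel_edge n (E : 'I_n -> 'I_n -> Prop) u v : biprel E u v ->
  exists i j, E i j /\ ((u, v) = (inl i, inr j) \/ (u, v) = (inr j, inl i)).
Proof. by case: u v => [i|j] [k|l] //= Eij; do 2 eexists; split; eauto. Qed.

Definition vertex_pos n (a b : 'I_n -> R * R) (u : 'I_n + 'I_n) : R * R :=
  match u with inl i => a i | inr j => b j end.

Section StraightLineDrawing.
Variables (n : nat) (r : R) (a b : 'I_n -> R * R) (E : 'I_n -> 'I_n -> Prop).
Hypothesis r_gt0 : 0 < r.
Hypothesis a_sep : forall i k, i != k -> 2 * r <= dist (a i) (a k).
Hypothesis b_sep : forall j l, j != l -> 2 * r <= dist (b j) (b l).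
Hypothesis E_close : forall i j, E i j -> dist (a i) (b j) < 2 * r.
Hypothesis a_neq_b : forall i j, a i != b j.

Local Notation vpos := (vertex_pos a b).

Lemma segment_avoids_vertex i j t w :
  E i j -> 0 < t < 1 -> lerp (a i) (b j) t != vpos w.
Proof.
move=> Eij /andP[t0 t1]; have Dlt := E_close Eij; have D0 := dist_gt0 (a_neq_b i j).
apply/eqP; case: w => [k|l] /= pE.
- have := dist_lerpl (a i) (b j) (ltW t0); rewrite pE.
  have [<-|ik] := eqVneq i k; first by rewrite dist_xx; nra.
  by have := a_sep ik; nra.
- have := dist_lerpr (a i) (b j) (ltW t1); rewrite pE.
  have [<-|jl] := eqVneq j l; first by rewrite dist_xx; nra.
  by have := b_sep jl; rewrite distC; nra.
Qed.

Lemma segments_disjoint i j i' j' t t' : E i j -> E i' j' -> (i, j) != (i', j') ->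
  0 < t < 1 -> 0 < t' < 1 -> lerp (a i) (b j) t != lerp (a i') (b j') t'.
Proof.
move=> Eij Eij' ij /andP[t0 t1] /andP[t'0 t'1]; apply/eqP => pE.
have := E_close Eij; have := E_close Eij'.
have [ii'|ii'] := eqVneq i i'.
  subst i'; have jj' : j != j' by apply: contraNneq ij => ->.
  have := b_sep jj'; have := dist_same_ray t0 t'0 pE.
  by rewrite le_max => /orP[]; lra.
have [jj'|jj'] := eqVneq j j'.
  subst j'; rewrite (lerp_rev (b j) (a i)) (lerp_rev (b j) (a i')) in pE.
  have s0 : 0 < 1 - t by rewrite subr_gt0.
  have s'0 : 0 < 1 - t' by rewrite subr_gt0.
  have := a_sep ii'; have := dist_same_ray s0 s'0 pE.
  by rewrite !(distC (b j)) le_max => /orP[]; lra.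
have t01 : 0 <= t <= 1 by rewrite !ltW.
have t'01 : 0 <= t' <= 1 by rewrite !ltW.
have := a_sep ii'; have := b_sep jj'; have := dist_crossing t01 t'01 pE; lra.
Qed.

Lemma straight_line_drawing :
  planar_drawing (biprel E) vpos (fun u v => lerp (vpos u) (vpos v)).
Proof.
split.
  case=> [i|j] [k|l] //= pE.
  - have [-> //|ik] := eqVneq i k.
    by have := a_sep ik; rewrite pE dist_xx leNgt mulr_gt0.
  - by have := a_neq_b i l; rewrite pE eqxx.
  - by have := a_neq_b k j; rewrite pE eqxx.
  - have [-> //|jl] := eqVneq j l.
    by have := b_sep jl; rewrite pE dist_xx leNgt mulr_gt0.
have edge_ends u v : biprel E u v -> vpos u != vpos v.
  case/biprel_edge => i [j [_ [[-> ->]|[-> ->]]]] /=; first exact: a_neq_b.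
  by rewrite eq_sym a_neq_b.
have edge_interior u v t : biprel E u v -> 0 < t < 1 -> exists i j (t0 : R),
    [/\ E i j, 0 < t0 < 1, lerp (vpos u) (vpos v) t = lerp (a i) (b j) t0
      & (u, v) = (inl i, inr j) \/ (u, v) = (inr j, inl i)].
  case/biprel_edge => i [j [Eij uv]] t01; exists i, j.
  case: uv => -[-> ->]; first by exists t; split => //; left.
  exists (1 - t); split => //=; [lra | exact: lerp_rev | by right].
move=> u v uv; split.
- by apply: continuous_subspaceT; exact: lerp_continuous.
- by rewrite lerp0 lerp1.
- by move=> t t' /andP[t0 _] /andP[t'0 _]; apply: lerp_inj (edge_ends _ _ uv) t0 t'0.
- move=> t w /(edge_interior _ _ _ uv) [i [j [t0 [Eij t01 -> _]]]].
  by apply/eqP; exact: segment_avoids_vertex.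
- move=> u' v' uv' uv'_ne vu'_ne t t'.
  move=> /(edge_interior _ _ _ uv) [i [j [t0 [Eij t01 -> huv]]]].
  move=> /(edge_interior _ _ _ uv') [i' [j' [t0' [Eij' t01' -> huv']]]].
  apply/eqP; apply: segments_disjoint => //; apply/eqP => -[ii' jj']; subst i' j'.
  by case: huv huv' => -[? ?] [] [? ?]; subst; tauto.
Qed.

End StraightLineDrawing.

Lemma feasible_dist2 n r (a : 'I_n -> R * R) :
  feasible r a -> forall i k, i != k -> (2 * r) ^+ 2 <= dist2 (a i) (a k).
Proof. by move=> Fa i k ik; rewrite leNgt; apply/negP; exact: Fa. Qed.

Lemma feasible_dist n r (a : 'I_n -> R * R) : 0 <= r ->
  feasible r a -> forall i k, i != k -> 2 * r <= dist (a i) (a k).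
Proof. by move=> r0 Fa i k ik; rewrite dist_geE ?mulr_ge0 ?feasible_dist2. Qed.

Lemma exists_pos_below (T : finType) (f : T -> R) :
  exists2 e : R, 0 < e & forall y, 0 < f y -> e < f y.
Proof.
suff [e e0 lt_e] : exists2 e : R, 0 < e &
    forall x, x \in map f (enum T) -> 0 < x -> e < x.
  by exists e => // y; apply: lt_e; rewrite map_f ?mem_enum.
elim: (map f (enum T)) => [|x l [e e0 lt_e]]; first by exists 1.
have [x0|x_le0] := ltP 0 x.
  exists (Num.min e (x / 2)); first by rewrite lt_min e0 divr_gt0.
  move=> y; rewrite inE => /orP[/eqP -> _|yl y0]; rewrite gt_min.
    by rewrite ltr_pdivrMr // orbC ltr_pMr ?ltr1n.
  by rewrite lt_e.
exists e => // y; rewrite inE => /orP[/eqP -> x_gt0|]; last exact: lt_e.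
by move: x_gt0; rewrite ltNge x_le0.
Qed.

(* A start and a goal pose may coincide, which a plane drawing forbids. *)
Lemma shifted_goals n r (s g : 'I_n -> R * R) : 0 <= r -> exists h : 'I_n -> R * R,
  [/\ forall j l, dist (h j) (h l) = dist (g j) (g l),
      forall i j, discs_overlap r (s i) (g j) -> dist (s i) (h j) < 2 * r &
      forall i j, s i != h j].
Proof.
move=> r0.
have [e1 e1_gt0 lt_e1] :=
  exists_pos_below (fun ij : 'I_n * 'I_n => 2 * r - dist (s ij.1) (g ij.2)).
have [e2 e2_gt0 lt_e2] :=
  exists_pos_below (fun ij : 'I_n * 'I_n => (s ij.1).1 - (g ij.2).1).
pose eps := Num.min e1 e2.
have eps_gt0 : 0 < eps by rewrite lt_min e1_gt0.
have eps_le1 : eps <= e1 by rewrite ge_min lexx.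
have eps_le2 : eps <= e2 by rewrite ge_min lexx orbT.
pose h j := ((g j).1 + eps, (g j).2).
have dist_gh j : dist (g j) (h j) = eps.
  rewrite /dist (_ : dist2 _ _ = eps ^+ 2) ?sqrtr_sqr ?gtr0_norm //.
  by rewrite /dist2 /=; ring.
exists h; split.
- by move=> j l; rewrite /dist /dist2 /=; congr Num.sqrt; ring.
- move=> i j; rewrite /discs_overlap -/(dist2 _ _) -dist_ltE ?mulr_ge0 // => ov.
  have := lt_e1 (i, j); have := dist_triangle (s i) (g j) (h j).
  rewrite dist_gh /=; lra.
- move=> i j; apply/eqP => /(congr1 fst) /= sE.
  have := lt_e2 (i, j); rewrite /= sE; lra.
Qed.

Lemma udg_neighbor_dist2 n r (s g : 'I_n -> R * R) u v : udg r s g u v ->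
  dist2 (vertex_pos s g v) (vertex_pos s g u) < (2 * r) ^+ 2.
Proof. by case: u v => [i|j] [k|l] //=; rewrite dist2C. Qed.

Lemma udg_neighbors_sep n r (s g : 'I_n -> R * R) u v w :
  feasible r s -> feasible r g -> udg r s g u v -> udg r s g u w -> v != w ->
  (2 * r) ^+ 2 <= dist2 (vertex_pos s g v) (vertex_pos s g w).
Proof.
move=> Fs Fg; case: u v w => [i|j] [k|l] [k'|l'] //= _ _ vw;
  by apply: feasible_dist2 => //; apply: contraNneq vw => ->.
Qed.

End Plane.

Theorem proposition3 (R : realType) (n : nat) (r : R)
  (s g : 'I_n -> R * R) :
  0 < r -> feasible r s -> feasible r g ->
  [/\ bipartite_between (udg r s g),
      planar R (udg r s g) &
      max_degree_le (udg r s g) 5].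
Proof.
move=> r_gt0 Fs Fg; split.
- by case=> [i|j] [k|l].
- have [h [h_dist h_close s_neq_h]] := shifted_goals s g (ltW r_gt0).
  exists (vertex_pos s h), (fun u v => lerp (vertex_pos s h u) (vertex_pos s h v)).
  pose E i j := discs_overlap r (s i) (g j).
  apply: (straight_line_drawing (E := E) r_gt0) => //.
  + exact: feasible_dist (ltW r_gt0) Fs.
  + by move=> j l jl; rewrite h_dist; exact: feasible_dist (ltW r_gt0) Fg _ _ jl.
- move=> u; exists [set v | `[< udg r s g u v >]]; split.
    by move=> v uv; rewrite !inE.
  apply: (card_separated_in_ball_le5 (q := vertex_pos s g) (o := vertex_pos s g u)
    (d := (2 * r) ^+ 2)).
  + by move=> v; rewrite !inE => /udg_neighbor_dist2.
  + move=> v w; rewrite !inE => uv uw.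
    exact: (udg_neighbors_sep Fs Fg uv uw).
Qed.
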